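(* Let $k\ge2$ be even, let $p\ge2$ be an integer, and let $G=C(p,p,\dots,p)$ ($k$ entries, all equal to $p$). Then the number $m(G)$ of distinct Laplacian eigenvalues of $G$ equals $k+1$.
   Context: $C(\alpha_1,\dots,\alpha_k)$ is defined recursively by $C(\alpha_1)=\overline{K_{\alpha_1}}$ (edgeless graph) and $C(\alpha_1,\dots,\alpha_i)=\overline{C(\alpha_1,\dots,\alpha_{i-1})\cup K_{\alpha_i}}$ for $i=2,\dots,k$ (disjoint union, then complement). Equivalently for $k$ even, with $\pi_i$ the $\alpha_i$ vertices introduced at step $i$: $\pi_i$ is a clique for $i$ odd, independent for $i$ even, and for $i<j$ vertices of $\pi_i,\pi_j$ are adjacent iff $j$ is even. Laplacian eigenvalues are those of $L=D-A$. *)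

From HB Require Import structures.
From mathcomp Require Import all_boot all_order all_algebra all_field.
Set Implicit Arguments. Unset Strict Implicit. Unset Printing Implicit Defensive.
Import Order.TTheory GRing.Theory Num.Theory.
Local Open Scope ring_scope.

(* Cadj rs : adjacency of C(alpha_1,...,alpha_k) where rs = rev alpha
   = [:: alpha_k; ...; alpha_1].  The vertices introduced at step i are
   numbered sumn [alpha_1..alpha_{i-1}] .. sumn [alpha_1..alpha_i] - 1.
   Step i: complement of (previous graph  disjoint-union  K_{alpha_i}),
   with the new clique on the vertices n .. n+alpha_i-1, n = sumn(previous).
   For the first step (previous graph empty, n = 0) this gives the complement
   of K_{alpha_1}, i.e. the edgeless graph, as in the definition. *)
Fixpoint Cadj (rs : seq nat) (u v : nat) : bool :=
  match rs with
  | [::] => false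
  | a :: rs' =>
      let n := sumn rs' in
      (u != v) && ~~ ([&& (u < n)%N, (v < n)%N & Cadj rs' u v] || ((n <= u)%N && (n <= v)%N))
  end.

Definition C_adj (alpha : seq nat) (u v : 'I_(sumn alpha)) : bool :=
  Cadj (rev alpha) u v.

Definition laplacian (n : nat) (adj : 'I_n -> 'I_n -> bool) : 'M[algC]_n :=
  \matrix_(i, j) (if i == j then (#|[set j0 | adj i j0]|)%:R
                  else - ((adj i j : nat)%:R)).

Definition C_laplacian (alpha : seq nat) : 'M[algC]_(sumn alpha) :=
  laplacian (@C_adj alpha).

Definition num_distinct_eigenvalues (n : nat) (A : 'M[algC]_n) (m : nat) : Prop :=
  exists s : seq algC, [/\ uniq s, (forall a, eigenvalue A a = (a \in s)) & size s = m].

From HB Require Import structures.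
From mathcomp Require Import all_boot all_order all_algebra all_field.
From mathcomp Require Import zify ring.
Set Implicit Arguments. Unset Strict Implicit. Unset Printing Implicit Defensive.
Import Order.TTheory GRing.Theory Num.Theory.

(* Number the [k] blocks from 0.  Vertices of distinct blocks [g], [h] are
   adjacent iff [maxn g h] is odd, and block [g] is a clique iff [g] is even,
   so the Laplacian only sees blocks.  An eigenvector taking two different
   values on one block [h] forces the eigenvalue [p * block_deg k h], where
   [block_deg k h <= k] counts the blocks adjacent to [h] (its own block
   included when it is a clique).  An eigenvector constant on blocks descends
   to the quotient on blocks; there the last block is joined to everything and
   the one before it only to the last, which peels off two blocks and lowers
   the eigenvalue by one, so by induction the eigenvalues are [i * p] with
   [i <= k].  Conversely, [0] comes from the constant vector, [k./2 * p] from a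
   vector supported on two vertices of block 1, and every other [i * p] from a
   quotient eigenvector equal to [-1] before some block [l], to [l] on block
   [l], and to [0] after it. *)

Lemma CadjC rs u v : Cadj rs u v = Cadj rs v u.
Proof.
elim: rs => //= a rs IHrs; rewrite eq_sym IHrs.
by case: (u < sumn rs); case: (v < sumn rs); case: (sumn rs <= u); case: (sumn rs <= v).
Qed.

Lemma Cadj_irr rs u : Cadj rs u u = false.
Proof. by case: rs => //= a rs; rewrite eqxx. Qed.

Lemma Cadj_nseq m p u v : 0 < p -> u < m * p -> v < m * p ->
  Cadj (nseq m p) u v =
  (u != v) && (odd (m - maxn (u %/ p) (v %/ p)) (+) (u %/ p == v %/ p)).
Proof.
move=> p_gt0; elim: m => [|m IHm] ltu ltv; first by rewrite mul0n in ltu.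
rewrite /= sumn_nseq [p * m]mulnC.
have div_lt w : w < m * p -> w %/ p < m by rewrite ltn_divLR.
have div_top w : m * p <= w -> w < m.+1 * p -> w %/ p = m.
  by move=> ge_w lt_w; apply/eqP; rewrite eqn_leq -ltnS ltn_divLR // lt_w leq_divRL.
case: (ltnP u (m * p)) => hu; case: (ltnP v (m * p)) => hv /=.
- rewrite IHm //; case: (u != v) => //=.
  have lt_max : maxn (u %/ p) (v %/ p) < m by rewrite gtn_max (div_lt _ hu) (div_lt _ hv).
  by rewrite subSn ?(ltnW lt_max) //= orbF addNb.
- have lt_u := div_lt _ hu.
  by rewrite (div_top v) // (maxn_idPr (ltnW lt_u)) subSnn (ltn_eqF lt_u).
- have lt_v := div_lt _ hv.
  by rewrite (div_top u) // (maxn_idPl (ltnW lt_v)) subSnn (gtn_eqF lt_v).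
- by rewrite (div_top u) // (div_top v) // maxnn subSnn eqxx andbF.
Qed.

(* Block [g] is pi_(g+1) of the paper; the diagonal value records whether a
   block is a clique. *)
Definition block_adj (g h : nat) : bool := odd (maxn g h) (+) (g == h).

Lemma block_adjC g h : block_adj g h = block_adj h g.
Proof. by rewrite /block_adj maxnC eq_sym. Qed.

Lemma block_adj_gt g h : h < g -> block_adj g h = odd g.
Proof.
by move=> lt_hg; rewrite /block_adj (gtn_eqF lt_hg) addbF (maxn_idPl (ltnW lt_hg)).
Qed.

Lemma block_adj_lt g h : g < h -> block_adj g h = odd h.
Proof. by move=> lt_gh; rewrite block_adjC block_adj_gt. Qed.

Lemma Cadj_nseq_even k p u v : ~~ odd k -> 0 < p -> u < k * p -> v < k * p ->
  u != v -> Cadj (nseq k p) u v = block_adj (u %/ p) (v %/ p).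
Proof.
move=> k_even p_gt0 ltu ltv neq_uv; rewrite Cadj_nseq // neq_uv oddB ?(negbTE k_even) //.
by rewrite geq_max; apply/andP; split; apply: ltnW; rewrite ltn_divLR.
Qed.

Lemma sum_odd_nat n : \sum_(0 <= g < n) odd g = n./2.
Proof.
elim: n => [|n IHn]; first by rewrite big_geq.
by rewrite big_nat_recr //= IHn; lia.
Qed.

Lemma sum_odd_nat_from a n : a <= n -> \sum_(a <= g < n) odd g = n./2 - a./2.
Proof.
move=> le_an; have := sum_odd_nat n.
by rewrite (big_cat_nat _ (n := a)) //= sum_odd_nat; lia.
Qed.

Local Open Scope ring_scope.

Lemma sum_nat_blocks (V : nmodType) k p (f : nat -> V) :
  \sum_(0 <= i < k * p) f i = \sum_(0 <= g < k) \sum_(0 <= r < p) f (g * p + r)%N.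
Proof.
elim: k => [|k IHk]; first by rewrite mul0n !big_geq.
rewrite big_nat_recr //= -IHk mulSnr (big_cat_nat _ (n := (k * p)%N)) ?leq_addr //=.
congr (_ + _); rewrite -{1}(add0n (k * p)%N) big_addn addKn.
by apply: eq_bigr => r _; rewrite addnC.
Qed.

Lemma sum_nat_delta (R : pzSemiRingType) n m (x : nat -> R) : (m < n)%N ->
  \sum_(0 <= i < n) (i == m)%:R * x i = x m.
Proof.
move=> lt_mn; rewrite (bigD1_seq m) ?mem_index_iota ?iota_uniq //= eqxx mul1r.
by rewrite big1 ?addr0 // => i /negbTE ->; rewrite mul0r.
Qed.

Lemma card_set_natr n (P : pred 'I_n) :
  (#|[set i | P i]|)%:R = \sum_i (P i)%:R :> algC.
Proof.
rewrite cardsE -sum1_card natr_sum big_mkcond /=.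
by apply: eq_bigr => i _; rewrite unfold_in; case: (P i).
Qed.

Lemma laplacian_mulE n (adj : 'I_n -> 'I_n -> bool) (v : 'rV[algC]_n) j :
  (forall i j, adj i j = adj j i) -> (forall i, adj i i = false) ->
  (v *m laplacian adj) 0 j = \sum_i (adj i j)%:R * (v 0 j - v 0 i).
Proof.
move=> adjC adj_irr; rewrite mxE (bigD1 j) //= !mxE eqxx card_set_natr.
under eq_bigr => i neq_ij do rewrite !mxE (negbTE neq_ij) mulrN.
under [RHS]eq_bigr => i _ do rewrite mulrBr.
rewrite sumrB sumrN mulr_sumr [X in _ = _ - X](bigD1 j) //= adj_irr mul0r add0r.
by congr (_ - _); apply: eq_bigr => i _; rewrite mulrC // adjC.
Qed.

Definition rv_nat (R : nmodType) n (v : 'rV[R]_n) (m : nat) : R :=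
  if insub m is Some j then v 0 j else 0.

Lemma rv_natE (R : nmodType) n (v : 'rV[R]_n) (j : 'I_n) : rv_nat v j = v 0 j.
Proof. by rewrite /rv_nat valK. Qed.

Lemma rv_natK (R : nmodType) n (v : 'rV[R]_n) : \row_(j < n) rv_nat v j = v.
Proof. by apply/rowP => j; rewrite mxE rv_natE. Qed.

(* The Laplacian acting on vectors constant on blocks, divided by the block
   size. *)
Definition quot_lap (k : nat) (c : nat -> algC) (h : nat) : algC :=
  \sum_(0 <= g < k) (block_adj g h)%:R * (c h - c g).

Definition block_deg (k h : nat) : nat := \sum_(0 <= g < k) block_adj g h.

Lemma block_deg_le k h : (block_deg k h <= k)%N.
Proof.
apply: (@leq_trans (\sum_(0 <= g < k) 1)%N); first by apply: leq_sum => g _; apply: leq_b1.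
by rewrite sum_nat_const_nat subn0 muln1.
Qed.

Lemma block_deg1 k : (1 < k)%N -> block_deg k 1 = k./2.
Proof.
move=> lt1k; rewrite /block_deg -sum_odd_nat.
rewrite big_ltn ?(ltnW lt1k) // big_ltn // [RHS]big_ltn ?(ltnW lt1k) // [RHS]big_ltn //=.
by congr (_ + (_ + _))%N; apply: eq_big_nat => g /andP[lt1g _]; rewrite block_adj_gt.
Qed.

Lemma quot_lap_sum k c : \sum_(0 <= h < k) quot_lap k c h = 0.
Proof.
rewrite /quot_lap.
under eq_bigr => h _ do (under eq_bigr => g _ do rewrite mulrBr; rewrite sumrB).
rewrite sumrB exchange_big_nat /=; apply/eqP; rewrite subr_eq0; apply/eqP.
by apply: eq_bigr => h _; apply: eq_bigr => g _; rewrite block_adjC.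
Qed.

(* For even [M], the clique [M] is joined only to [M.+1], which is joined to
   every block. *)
Lemma quot_lap_recr M c h : ~~ odd M -> (h < M)%N ->
  quot_lap M.+2 c h = quot_lap M c h + (c h - c M.+1).
Proof.
move=> M_even lt_hM; rewrite /quot_lap !big_nat_recr //=.
rewrite block_adj_gt // block_adj_gt ?(ltn_trans lt_hM) //= (negbTE M_even).
by rewrite mul0r addr0 mul1r.
Qed.

Lemma quot_lap_last M c : ~~ odd M -> \sum_(0 <= h < M.+2) c h = 0 ->
  quot_lap M.+2 c M.+1 = M.+2%:R * c M.+1.
Proof.
move=> M_even sum_c0; rewrite /quot_lap.
rewrite (eq_big_nat _ _ (F2 := fun g => c M.+1 - c g)); last first.
  move=> g /andP[_]; rewrite ltnS leq_eqVlt => /predU1P[->|lt_g].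
    by rewrite subrr !mulr0.
  by rewrite block_adj_lt //= (negbTE M_even) mul1r.
by rewrite sumrB sum_c0 subr0 sumr_const_nat subn0 mulr_natl.
Qed.

Lemma quot_lap_penult M c : ~~ odd M -> quot_lap M.+2 c M = c M - c M.+1.
Proof.
move=> M_even; rewrite /quot_lap !big_nat_recr //= subrr mulr0 addr0.
rewrite big1_seq ?add0r => [|g]; last first.
  rewrite mem_index_iota => /andP[_ lt_gM].
  by rewrite block_adj_lt // (negbTE M_even) mul0r.
by rewrite block_adj_gt //= (negbTE M_even) mul1r.
Qed.

(* Peel off the last two blocks: if the eigenvector does not vanish on them,
   the eigenvalue is [t.*2.+2] or [1]; otherwise it restricts to an
   eigenvector for [t.*2] blocks with eigenvalue lowered by one. *)
Lemma quot_lap_eigen_nat t (c : nat -> algC) b :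
  (forall h, (h < t.*2)%N -> quot_lap t.*2 c h = b * c h) ->
  (exists2 h, (h < t.*2)%N & c h != 0) -> exists2 i, (i <= t.*2)%N & b = i%:R.
Proof.
elim: t c b => [|t IHt] c b eig_c [h0 lt_h0 ch0_neq0]; first by rewrite ltn0 in lt_h0.
have [->|b_neq0] := eqVneq b 0; first by exists 0%N.
have even_t2 : ~~ odd t.*2 by rewrite odd_double.
rewrite doubleS in eig_c lt_h0 *.
have sum_c0 : \sum_(0 <= h < t.*2.+2) c h = 0.
  have := quot_lap_sum t.*2.+2 c.
  rewrite (eq_big_nat _ _ (F2 := fun h => b * c h)) => [|h /andP[_ lt_h]]; last first.
    exact: eig_c.
  by rewrite -mulr_sumr => /eqP; rewrite mulf_eq0 (negbTE b_neq0) => /eqP.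
have [->|b_neq_top] := eqVneq b t.*2.+2%:R; first by exists t.*2.+2.
have c_top0 : c t.*2.+1 = 0.
  have /eqP := eig_c _ (ltnSn _); rewrite quot_lap_last // -subr_eq0 -mulrBl.
  by rewrite mulf_eq0 subr_eq0 eq_sym (negbTE b_neq_top) => /eqP.
have [->|b_neq1] := eqVneq b 1; first by exists 1%N.
have c_pen0 : c t.*2 = 0.
  have /eqP := eig_c _ (leqnSn _); rewrite quot_lap_penult // c_top0 subr0.
  rewrite -{1}(mul1r (c t.*2)) -subr_eq0 -mulrBl mulf_eq0 subr_eq0 eq_sym (negbTE b_neq1).
  by move/eqP.
have [i le_i b1E] : exists2 i, (i <= t.*2)%N & b - 1 = i%:R.
  apply: (IHt c) => [h lt_h|].
    have := eig_c h (ltn_trans lt_h (ltn_trans (ltnSn _) (ltnSn _))).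
    by rewrite quot_lap_recr // c_top0 subr0 mulrBl mul1r => /(canRL (addrK _)).
  exists h0 => //; move: lt_h0; rewrite ltnS leq_eqVlt => /predU1P[eq_h0|].
    by move: ch0_neq0; rewrite eq_h0 c_top0 eqxx.
  rewrite ltnS leq_eqVlt => /predU1P[eq_h0|//].
  by move: ch0_neq0; rewrite eq_h0 c_pen0 eqxx.
by exists i.+1; rewrite ?ltnS ?(leq_trans le_i) // -natr1 -b1E subrK.
Qed.

Definition step_vec (l g : nat) : algC :=
  if (g < l)%N then -1 else if g == l then l%:R else 0.

(* Block [l] sees all earlier blocks iff [l] is odd, and the later
   neighbours of every block [g <= l] are the odd blocks after [l]. *)
Lemma quot_lap_step_vec k l h : (0 < l < k)%N -> (h < k)%N ->
  quot_lap k (step_vec l) h = (odd l * l.+1 + (k./2 - l.+1./2))%:R * step_vec l h.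
Proof.
move=> /andP[l_gt0 lt_lk] lt_hk.
rewrite /quot_lap (big_cat_nat _ (n := l)) ?(ltnW lt_lk) //=.
rewrite (big_cat_nat _ (m := l) (n := l.+1)) //= big_nat1.
have odd_after : \sum_(l.+1 <= g < k) ((odd g)%:R : algC) = (k./2 - l.+1./2)%N%:R.
  by rewrite -sum_odd_nat_from // natr_sum.
have step_l : step_vec l l = l%:R by rewrite /step_vec ltnn eqxx.
have step_gt g : (l < g)%N -> step_vec l g = 0.
  by move=> lt_lg; rewrite /step_vec ltnNge (ltnW lt_lg) /= (gtn_eqF lt_lg).
have step_lt g : (g < l)%N -> step_vec l g = -1 by move=> lt_gl; rewrite /step_vec lt_gl.
rewrite natrD natrM -odd_after; case: (ltngtP h l) => [lt_hl|lt_lh|->].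
- rewrite step_lt // (eq_big_nat (n := l) _ _ (F2 := fun=> 0)).
    2: by move=> g /andP[_ lt_gl]; rewrite step_lt // subrr mulr0.
  rewrite big1_eq add0r block_adj_gt // step_l.
  rewrite (eq_big_nat _ _ (F2 := fun g => (odd g)%:R * (-1 : algC))); last first.
    by move=> g /andP[lt_lg _]; rewrite block_adj_gt ?step_gt ?subr0 // (ltn_trans lt_hl).
  by rewrite -mulr_suml -natr1; ring.
- rewrite step_gt // mulr0 (eq_big_nat (m := l.+1) _ _ (F2 := fun=> 0)).
    2: by move=> g /andP[lt_lg _]; rewrite step_gt // subrr mulr0.
  rewrite big1_eq addr0 block_adj_lt // step_l sub0r.
  rewrite (eq_big_nat _ _ (F2 := fun g => (odd h)%:R * (1 : algC))); last first.
    move=> g /andP[_ lt_gl].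
    by rewrite block_adj_lt ?step_lt ?sub0r ?opprK // (ltn_trans lt_gl).
  by rewrite sumr_const_nat subn0 mulr1 -mulr_natr; ring.
- rewrite step_l subrr mulr0 add0r.
  rewrite (eq_big_nat _ _ (F2 := fun g => (odd l)%:R * (l%:R + 1 : algC))); last first.
    by move=> g /andP[_ lt_gl]; rewrite block_adj_lt // step_lt // opprK.
  rewrite (eq_big_nat (m := l.+1) _ _ (F2 := fun g => (odd g)%:R * l%:R)); last first.
    by move=> g /andP[lt_lg _]; rewrite block_adj_gt // step_gt // subr0.
  by rewrite -mulr_suml sumr_const_nat subn0 -natr1 -[(_ *+ l)]mulr_natr -mulr_suml; ring.
Qed.

Lemma step_eig_onto k i : ~~ odd k -> (0 < i <= k)%N -> i != k./2 ->
  exists2 l, (0 < l < k)%N & i = (odd l * l.+1 + (k./2 - l.+1./2))%N.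
Proof.
move=> k_even /andP[i_gt0 le_ik] i_neq_half; case: (ltnP k./2 i) => [gt_i|le_i].
- exists (2 * i - k - 1)%N; first lia.
  have -> : odd (2 * i - k - 1) by move: k_even; lia.
  by move: k_even; lia.
- exists (k - 2 * i)%N; first lia.
  have -> : odd (k - 2 * i) = false by move: k_even; lia.
  by move: k_even; lia.
Qed.

Section EqualBlocks.

Variables k p : nat.
Hypothesis k_even : ~~ odd k.
Hypothesis p_gt0 : (0 < p)%N.

Local Notation n := (sumn (nseq k p)).
Local Notation L := (C_laplacian (nseq k p)).

Lemma C_order : n = (k * p)%N.
Proof. by rewrite sumn_nseq mulnC. Qed.

Lemma block_ltk (j : 'I_n) : (j %/ p < k)%N.
Proof. by rewrite ltn_divLR // -C_order. Qed.

Lemma block_head_lt h : (h < k)%N -> (h * p < n)%N.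
Proof. by move=> lt_hk; rewrite C_order ltn_pmul2r. Qed.

Lemma C_laplacian_mulE (F : nat -> algC) (j : 'I_n) :
  ((\row_i F i) *m L) 0 j =
  \sum_(0 <= i < k * p) (block_adj (i %/ p) (j %/ p))%:R * (F j - F i).
Proof.
rewrite laplacian_mulE => [|u v|u]; last by rewrite /C_adj Cadj_irr.
  rewrite /C_adj rev_nseq; under eq_bigr => i _ do rewrite !mxE.
  rewrite -(big_mkord xpredT (fun i => (Cadj (nseq k p) i j)%:R * (F j - F i))).
  rewrite [in X in \sum_(0 <= i < X) _]C_order.
  apply: eq_big_nat => i /andP[_ lt_i].
  have [->|neq_ij] := eqVneq i j; first by rewrite !subrr !mulr0.
  by rewrite Cadj_nseq_even // -C_order.
by rewrite /C_adj CadjC.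
Qed.

Lemma sum_block_adj h :
  \sum_(0 <= i < k * p) (block_adj (i %/ p) h)%:R = (p * block_deg k h)%N%:R :> algC.
Proof.
rewrite sum_nat_blocks natrM natr_sum mulr_sumr; apply: eq_bigr => g _.
rewrite (eq_big_nat _ _ (F2 := fun=> (block_adj g h)%:R)) => [|r /andP[_ lt_rp]].
  by rewrite sumr_const_nat subn0 mulr_natl.
by rewrite divnMDl // divn_small // addn0.
Qed.

Lemma C_laplacian_mul_blockwise (c : nat -> algC) (j : 'I_n) :
  ((\row_i c (i %/ p)%N) *m L) 0 j = p%:R * quot_lap k c (j %/ p).
Proof.
rewrite (C_laplacian_mulE (fun i => c (i %/ p)%N)) sum_nat_blocks /quot_lap mulr_sumr.
apply: eq_bigr => g _.
rewrite (eq_big_nat _ _ (F2 := fun=> (block_adj g (j %/ p))%:R * (c (j %/ p)%N - c g))).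
  by rewrite sumr_const_nat subn0 [RHS]mulr_natl.
by move=> r /andP[_ lt_rp]; rewrite divnMDl // divn_small ?addn0.
Qed.

Lemma eigenvalue_quot_lap (c : nat -> algC) b :
  (forall h, (h < k)%N -> quot_lap k c h = b%:R * c h) ->
  (exists2 h, (h < k)%N & c h != 0) -> eigenvalue L (b * p)%N%:R.
Proof.
move=> eig_c [h lt_hk ch_neq0]; apply/eigenvalueP; exists (\row_i c (i %/ p)%N).
  apply/rowP => j; rewrite C_laplacian_mul_blockwise !mxE eig_c ?block_ltk //.
  by rewrite natrM mulrCA mulrA.
apply: contra ch_neq0 => /eqP/rowP/(_ (Ordinal (block_head_lt lt_hk))).
by rewrite !mxE /= mulnK // => ->.
Qed.

(* A vector supported on two vertices of block [h], with opposite values. *)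
Lemma eigenvalue_block_deg h : (1 < p)%N -> (h < k)%N ->
  eigenvalue L (p * block_deg k h)%N%:R.
Proof.
move=> lt1p lt_hk; have lt_h1 : ((h * p).+1 < k * p)%N by nia.
pose F i : algC := (i == h * p)%N%:R - (i == (h * p).+1)%:R.
have head_blk : (h * p %/ p = h)%N by rewrite mulnK.
have next_blk : ((h * p).+1 %/ p = h)%N by rewrite -addn1 divnMDl // divn_small ?addn0.
apply/eigenvalueP; exists (\row_i F i).
  apply/rowP => j; rewrite C_laplacian_mulE !mxE.
  under eq_bigr => i _ do rewrite mulrBr.
  rewrite sumrB -mulr_suml sum_block_adj.
  under eq_bigr => i _ do rewrite mulrC mulrBl.
  rewrite sumrB !sum_nat_delta ?(ltnW lt_h1) // head_blk next_blk subrr subr0.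
  have [->|neq_h] := eqVneq (j %/ p)%N h; first by rewrite mulrC.
  suff -> : F j = 0 by rewrite !mulr0.
  have neq_head : (val j == h * p)%N = false.
    by apply: contraNF neq_h => /eqP ->; rewrite head_blk.
  have neq_next : (val j == (h * p).+1) = false.
    by apply: contraNF neq_h => /eqP ->; rewrite next_blk.
  by rewrite /F neq_head neq_next subrr.
apply/negP => /eqP/rowP/(_ (Ordinal (block_head_lt lt_hk))).
by rewrite !mxE /= /F eqxx (ltn_eqF (ltnSn _)) subr0 => /eqP; rewrite oner_eq0.
Qed.

Lemma eigenvector_nonconst_block (F : nat -> algC) a (u w : 'I_n) :
  (forall j : 'I_n, ((\row_i F i) *m L) 0 j = a * F j) ->
  (u %/ p = w %/ p)%N -> F u != F w -> a = (p * block_deg k (w %/ p))%N%:R.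
Proof.
move=> eigF eq_blk neqF.
have eq_diff : a * F u - a * F w = (p * block_deg k (w %/ p))%N%:R * (F u - F w).
  rewrite -(eigF u) -(eigF w) !C_laplacian_mulE eq_blk -sum_block_adj -sumrB mulr_suml.
  by apply: eq_bigr => i _; ring.
apply/eqP; rewrite -subr_eq0; apply: contraR neqF => neq0.
have : (a - (p * block_deg k (w %/ p))%N%:R) * (F u - F w) == 0.
  by rewrite mulrBl mulrBr eq_diff subrr.
by rewrite mulf_eq0 (negbTE neq0) subr_eq0.
Qed.

Lemma eigenvector_blockwise_quot (c : nat -> algC) a :
  (forall j : 'I_n, ((\row_i c (i %/ p)%N) *m L) 0 j = a * c (j %/ p)%N) ->
  forall h, (h < k)%N -> quot_lap k c h = a / p%:R * c h.
Proof.
move=> eig_c h lt_hk; have := eig_c (Ordinal (block_head_lt lt_hk)).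
rewrite C_laplacian_mul_blockwise /= mulnK // => eq_h.
by rewrite mulrAC -eq_h mulrC mulKf // pnatr_eq0 -lt0n.
Qed.

Lemma eigenvalue_C_natmul a :
  eigenvalue L a -> exists2 i, (i <= k)%N & a = (i * p)%N%:R.
Proof.
case/eigenvalueP => v eig_v v_neq0; pose F := rv_nat v.
have eigF j : ((\row_i F i) *m L) 0 j = a * F j by rewrite /F rv_natK eig_v mxE rv_natE.
case: (boolP [exists u : 'I_n, exists w : 'I_n, (u %/ p == w %/ p)%N && (F u != F w)]).
  case/existsP => u /existsP[w /andP[/eqP eq_blk neqF]].
  exists (block_deg k (w %/ p)); first exact: block_deg_le.
  by rewrite (eigenvector_nonconst_block eigF eq_blk neqF) mulnC.
move/existsPn => const_blk; pose c g := F (g * p)%N.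
have FE (j : 'I_n) : F j = c (j %/ p)%N.
  move: (const_blk j) => /existsPn/(_ (Ordinal (block_head_lt (block_ltk j)))).
  by rewrite /= mulnK // eqxx negbK => /eqP.
have rowF : \row_(i < n) F i = \row_i c (i %/ p)%N by apply/rowP => j; rewrite !mxE FE.
have [j0 vj0_neq0] : exists j, v 0 j != 0.
  apply/existsP; apply: contraR v_neq0 => /existsPn v0.
  by apply/eqP/rowP => j; rewrite mxE; apply/eqP/negPn/v0.
have k2 : (k./2).*2 = k by rewrite halfK (negbTE k_even) subn0.
have eig_c : forall h, (h < k)%N -> quot_lap k c h = a / p%:R * c h.
  by apply: eigenvector_blockwise_quot => j; rewrite -rowF eigF FE.
have c_neq0 : exists2 h, (h < k)%N & c h != 0.
  by exists (j0 %/ p)%N; rewrite ?block_ltk // -FE /F rv_natE.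
have := @quot_lap_eigen_nat k./2 c (a / p%:R).
rewrite k2 => /(_ eig_c c_neq0)[i le_ik aE]; exists i => //.
by rewrite natrM -aE divfK // pnatr_eq0 -lt0n.
Qed.

Lemma natmul_eigenvalue_C i : (1 < k)%N -> (1 < p)%N -> (i <= k)%N ->
  eigenvalue L (i * p)%N%:R.
Proof.
move=> lt1k lt1p le_ik; have [->|i_gt0] := posnP i.
  apply: (@eigenvalue_quot_lap (fun=> 1)) => [h _|].
    by rewrite mulr0n mul0r /quot_lap big1 // => g _; rewrite subrr mulr0.
  by exists 0%N; rewrite ?oner_eq0 // ltnW.
have [->|i_neq_half] := eqVneq i k./2.
  by rewrite mulnC -(block_deg1 lt1k); apply: eigenvalue_block_deg.
have range_i : (0 < i <= k)%N by rewrite i_gt0.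
have [l l_range ->] := step_eig_onto k_even range_i i_neq_half.
apply: (eigenvalue_quot_lap (c := step_vec l)) => [h lt_hk|].
  exact: quot_lap_step_vec.
case/andP: l_range => l_gt0 lt_lk; exists 0%N; first exact: leq_ltn_trans lt_lk.
by rewrite /step_vec l_gt0 oppr_eq0 oner_eq0.
Qed.

End EqualBlocks.

Local Close Scope ring_scope.

Theorem theorem3p2 (k p : nat) (hk : 2 <= k) (hkeven : ~~ odd k) (hp : 2 <= p) :
  num_distinct_eigenvalues (C_laplacian (nseq k p)) k.+1.
Proof.
have p_gt0 : 0 < p by apply: ltnW.
exists [seq (i * p)%:R%R | i <- iota 0 k.+1]; split.
- rewrite map_inj_in_uniq ?iota_uniq // => i j _ _ /eqP.
  by rewrite eqr_nat eqn_pmul2r // => /eqP.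
- move=> a; apply/idP/mapP => [/(eigenvalue_C_natmul hkeven p_gt0)[i le_ik ->]|[i]].
    by exists i; rewrite // mem_iota add0n ltnS.
  by rewrite mem_iota add0n ltnS => /andP[_ le_ik] ->; apply: natmul_eigenvalue_C.
- by rewrite size_map size_iota.
Qed.
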